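(* For each $\boldsymbol\alpha\in\mathbb C^d$, ${\rm Ann}(L(\boldsymbol\alpha))={\rm Ann}({}^RL(\boldsymbol\alpha))$ (two-sided ideals of $D(R_A)$).
   Context: $A\subset\mathbb Z^d$ is a finite set generating the group $\mathbb Z^d$; $R_A=\mathbb C[\mathbb NA]\subseteq\mathbb C[t_1^{\pm1},\dots,t_d^{\pm1}]$; $D(R_A)=\{P\in\mathbb C[t^{\pm1}]\langle\partial_1,\dots,\partial_d\rangle:P(R_A)\subseteq R_A\}$; $s_j=t_j\partial_j$. $M(\boldsymbol\alpha)=D(R_A)/\sum_iD(R_A)(s_i-\alpha_i)$, ${}^RM(\boldsymbol\alpha)=D(R_A)/\sum_i(s_i-\alpha_i)D(R_A)$. Let $\mathcal O$ be the category of left $D(R_A)$-modules $M=\bigoplus_{\boldsymbol\lambda}M_{\boldsymbol\lambda}$ with finite-dimensional $M_{\boldsymbol\lambda}=\{x:f(s)x=f(\boldsymbol\lambda)x\ \forall f\}$, and ${}^R\mathcal O$ the category of right modules with finite-dimensional $M_{\boldsymbol\lambda}=\{x:xf(s)=f(-\boldsymbol\lambda)x\ \forall f\}$. $L(\boldsymbol\alpha)$ (resp. ${}^RL(\boldsymbol\alpha)$) is the unique simple quotient of $M(\boldsymbol\alpha)$ in $\mathcal O$ (resp. of ${}^RM(\boldsymbol\alpha)$ in ${}^R\mathcal O$). *)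

From HB Require Import structures.
From mathcomp Require Import all_boot all_order all_algebra.
From mathcomp Require Import complex.
From mathcomp Require Import Rstruct.
Set Implicit Arguments. Unset Strict Implicit. Unset Printing Implicit Defensive.
Import Order.TTheory GRing.Theory Num.Theory.
Local Open Scope ring_scope.

Definition C : Type := complex Rdefinitions.R.
HB.instance Definition _ := GRing.Field.on C.

(* The lattice Z^d, as integer row vectors; coordinate j of z is z 0 j. *)
Definition Zd (d : nat) := 'rV[int]_d.

Definition generates_Zd d (A : seq (Zd d)) : Prop :=
  forall z : Zd d, exists k : 'I_(size A) -> int, z = \sum_(i < size A) A`_i *~ k i.

Definition inNA d (A : seq (Zd d)) (z : Zd d) : Prop :=
  exists k : 'I_(size A) -> nat, z = \sum_(i < size A) A`_i *+ k i.

(* A (formal) Laurent series sum_c u(c) t^c is coded by its coefficient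
   function u : Z^d -> C; Laurent polynomials are those of finite support.
   Operators of C[t^{+-1}]<d_1..d_d> act on these coefficient functions. *)
Definition Fn d := Zd d -> C.
Definition Op d := Fn d -> Fn d.

(* the operator t^a s^b,  s_j = t_j d_j  :   t^a s^b (t^e) = e^b t^(a+e) *)
Definition tsmon d (a : Zd d) (b : 'I_d -> nat) : Op d :=
  fun u c => (\prod_(j < d) (((c - a) 0 j)%:~R : C) ^+ b j) * u (c - a).

Definition LaurentOp d (P : Op d) : Prop :=
  exists n (coef : 'I_n -> C) (a : 'I_n -> Zd d) (b : 'I_n -> 'I_d -> nat),
    forall u, P u = (fun c => \sum_(k < n) coef k * tsmon (a k) (b k) u c).

Definition inRA d (A : seq (Zd d)) (u : Fn d) : Prop :=
  (exists s : seq (Zd d), forall c, u c <> 0 -> c \in s) /\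
  (forall c, u c <> 0 -> inNA A c).

Definition DRA d (A : seq (Zd d)) (P : Op d) : Prop :=
  LaurentOp P /\ forall u, inRA A u -> inRA A (P u).

Definition opadd d (P Q : Op d) : Op d := fun u c => P u c + Q u c.
Definition opscale d (k : C) (P : Op d) : Op d := fun u c => k * P u c.
Definition opmul d (P Q : Op d) : Op d := fun u => P (Q u).
Definition opid d : Op d := fun u => u.
Definition opS d (j : 'I_d) : Op d := tsmon 0 (fun i => (i == j : nat)).

Record leftDmod d (A : seq (Zd d)) (V : lmodType C) (act : Op d -> V -> V) : Prop := {
  lact_lin : forall P, DRA A P -> forall (k : C) x y, act P (k *: x + y) = k *: act P x + act P y;
  lact_add : forall P Q, DRA A P -> DRA A Q -> forall x, act (opadd P Q) x = act P x + act Q x;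
  lact_scale : forall k P, DRA A P -> forall x, act (opscale k P) x = k *: act P x;
  lact_mul : forall P Q, DRA A P -> DRA A Q -> forall x, act (opmul P Q) x = act P (act Q x);
  lact_one : forall x, act (@opid d) x = x }.

Definition lweight d (V : lmodType C) (act : Op d -> V -> V) (lam : 'I_d -> C) (x : V) :=
  forall j, act (opS j) x = lam j *: x.

Definition fin_dim (V : lmodType C) (S : V -> Prop) : Prop :=
  exists s : seq V, (forall v, v \in s -> S v) /\
    forall x, S x -> exists k : 'I_(size s) -> C, x = \sum_(i < size s) k i *: s`_i.

Definition inO_left d (V : lmodType C) (act : Op d -> V -> V) : Prop :=
  (forall x : V, exists n (lam : 'I_n -> 'I_d -> C) (xs : 'I_n -> V),
      (forall i, lweight act (lam i) (xs i)) /\ x = \sum_(i < n) xs i) /\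
  (forall lam, fin_dim (lweight act lam)).

Definition lsubmod d (A : seq (Zd d)) (V : lmodType C) (act : Op d -> V -> V) (S : V -> Prop) :=
  [/\ S 0, (forall x y, S x -> S y -> S (x + y)), (forall (k : C) x, S x -> S (k *: x))
    & (forall P x, DRA A P -> S x -> S (act P x))].

Definition lsimple d (A : seq (Zd d)) (V : lmodType C) (act : Op d -> V -> V) : Prop :=
  (exists x : V, x <> 0) /\
  forall S, lsubmod A act S -> (forall x, S x -> x = 0) \/ (forall x, S x).

(* V is a quotient of M(alpha) = D / sum_i D (s_i - alpha_i) *)
Definition quot_M d (A : seq (Zd d)) (alpha : 'I_d -> C) (V : lmodType C) (act : Op d -> V -> V) :=
  exists v : V, (forall j, act (opS j) v = alpha j *: v) /\
    forall x, exists P, DRA A P /\ x = act P v.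

Record rightDmod d (A : seq (Zd d)) (V : lmodType C) (act : V -> Op d -> V) : Prop := {
  ract_lin : forall P, DRA A P -> forall (k : C) x y, act (k *: x + y) P = k *: act x P + act y P;
  ract_add : forall P Q, DRA A P -> DRA A Q -> forall x, act x (opadd P Q) = act x P + act x Q;
  ract_scale : forall k P, DRA A P -> forall x, act x (opscale k P) = k *: act x P;
  ract_mul : forall P Q, DRA A P -> DRA A Q -> forall x, act x (opmul P Q) = act (act x P) Q;
  ract_one : forall x, act x (@opid d) = x }.

Definition rweight d (V : lmodType C) (act : V -> Op d -> V) (lam : 'I_d -> C) (x : V) :=
  forall j, act x (opS j) = - lam j *: x.

Definition inO_right d (V : lmodType C) (act : V -> Op d -> V) : Prop :=
  (forall x : V, exists n (lam : 'I_n -> 'I_d -> C) (xs : 'I_n -> V),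
      (forall i, rweight act (lam i) (xs i)) /\ x = \sum_(i < n) xs i) /\
  (forall lam, fin_dim (rweight act lam)).

Definition rsubmod d (A : seq (Zd d)) (V : lmodType C) (act : V -> Op d -> V) (S : V -> Prop) :=
  [/\ S 0, (forall x y, S x -> S y -> S (x + y)), (forall (k : C) x, S x -> S (k *: x))
    & (forall P x, DRA A P -> S x -> S (act x P))].

Definition rsimple d (A : seq (Zd d)) (V : lmodType C) (act : V -> Op d -> V) : Prop :=
  (exists x : V, x <> 0) /\
  forall S, rsubmod A act S -> (forall x, S x -> x = 0) \/ (forall x, S x).

(* V is a quotient of ^R M(alpha) = D / sum_i (s_i - alpha_i) D *)
Definition quot_RM d (A : seq (Zd d)) (alpha : 'I_d -> C) (V : lmodType C) (act : V -> Op d -> V) :=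
  exists v : V, (forall j, act v (opS j) = alpha j *: v) /\
    forall x, exists P, DRA A P /\ x = act v P.

Definition lAnn d (A : seq (Zd d)) (V : lmodType C) (act : Op d -> V -> V) (P : Op d) : Prop :=
  DRA A P /\ forall x, act P x = 0.
Definition rAnn d (A : seq (Zd d)) (V : lmodType C) (act : V -> Op d -> V) (P : Op d) : Prop :=
  DRA A P /\ forall x, act x P = 0.

From mathcomp Require Import all_boot all_order all_algebra.
From mathcomp Require Import complex Rstruct ring.
From Stdlib Require Import Classical FunctionalExtensionality.
Set Implicit Arguments. Unset Strict Implicit. Unset Printing Implicit Defensive.
Import Order.TTheory GRing.Theory Num.Theory.
Local Open Scope ring_scope.

(* Every X in D(R_A) is a finite sum of t-homogeneous components X_a
   (X_a t^c = g(c) t^(c+a)), each again in D(R_A), and s_j X_a = X_a (s_j + a_j).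
   Hence for a vector v of weight alpha, X v is [deg0_eval alpha X] times v plus
   weight vectors of weights alpha + a, a <> 0, and the polynomials
   (s_j - mu_j) / (alpha_j - mu_j) in s separate v from all of those.  If L is simple
   and generated by v, then P L <> 0 iff some Q P R maps v back to v, so
   Ann L = { P | deg0_eval alpha (Q P R) = 0 for all Q, R in D(R_A) }.
   A right module is a left module over the opposite ring, in which
   s_j X_a = X_a (s_j - a_j) and Q P R reads R P Q; the criterion is symmetric in
   Q and R, so the two annihilators coincide. *)

Lemma big_partition_seq (R : nmodType) (T : Type) (K : eqType) (key : T -> K)
    (F : T -> R) (s : seq T) (r : seq K) :
  uniq r -> {subset map key s <= r} ->
  \sum_(p <- s) F p = \sum_(k <- r) \sum_(p <- s | key p == k) F p.
Proof.
move=> r_uniq; rewrite (exchange_big_dep xpredT) //=.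
elim: s => [|p s IHs] sub_r; first by rewrite !big_nil.
rewrite !big_cons IHs => [|k k_s]; last by apply: sub_r; rewrite inE k_s orbT.
congr (_ + _).
rewrite -big_filter (@eq_filter _ _ (pred1 (key p))) => [|k]; last by rewrite /= eq_sym.
by rewrite filter_pred1_uniq ?big_seq1 // sub_r ?mem_head.
Qed.

Section LaurentOperators.
Variable d : nat.
Implicit Types (a : Zd d) (b : 'I_d -> nat) (P Q X : Op d) (u : Fn d) (c : Zd d).

Definition zvec (z : Zd d) : 'I_d -> C := fun j => (z 0 j)%:~R.
Definition monom (x : 'I_d -> C) b : C := \prod_(j < d) x j ^+ b j.
Definition expD b b' : 'I_d -> nat := fun i => (b i + b' i)%N.
Definition exp0 : 'I_d -> nat := fun _ => 0%N.
Definition exp1 (j : 'I_d) : 'I_d -> nat := fun i => (i == j : nat).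

Lemma tsmonE a b u c : tsmon a b u c = monom (zvec (c - a)) b * u (c - a).
Proof. by []. Qed.

Lemma tsmon0E b u c : tsmon 0 b u c = monom (zvec c) b * u c.
Proof. by rewrite tsmonE subr0. Qed.

Lemma zvecB (z z' : Zd d) j : zvec (z - z') j = zvec z j - zvec z' j.
Proof. by rewrite /zvec !mxE intrD intrN. Qed.

Lemma monom0 x : monom x exp0 = 1.
Proof. by rewrite /monom big1 // => j _; rewrite expr0. Qed.

Lemma monomD x b b' : monom x (expD b b') = monom x b * monom x b'.
Proof. by rewrite /monom -big_split; apply: eq_bigr => j _; rewrite exprD. Qed.

Lemma monom1 x j : monom x (exp1 j) = x j.
Proof.
rewrite /monom /exp1 (bigD1 j) //= eqxx expr1 big1 ?mulr1 // => i /negbTE ->.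
by rewrite expr0.
Qed.

Lemma exps_ind (Pr : ('I_d -> nat) -> Prop) :
  Pr exp0 -> (forall b j, Pr b -> Pr (expD b (exp1 j))) -> forall b, Pr b.
Proof.
move=> P0 PS b; have [n] := ubnP (\sum_(j < d) b j)%N.
elim: n b => // n IHn b; rewrite ltnS.
case: (pickP (fun j => 0 < b j)%N) => [j bj_gt0 | b0] Hb; last first.
  suff -> : b = exp0 by [].
  by apply: functional_extensionality => j; move/negbT: (b0 j); rewrite lt0n negbK => /eqP.
pose b' i := (b i - (i == j))%N.
have -> : b = expD b' (exp1 j).
  apply: functional_extensionality => i; rewrite /expD /b' /exp1.
  by case: eqVneq => [->|] /=; rewrite ?subn0 ?addn0 ?subnK.
apply/PS/IHn; suff Eb : ((\sum_(i < d) b' i).+1 = \sum_(i < d) b i)%N by rewrite -Eb in Hb.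
rewrite (bigD1 j) // [RHS](bigD1 j) //= /b' eqxx subn1 -addSn prednK //; congr (_ + _)%N.
by apply: eq_bigr => i /negbTE ->; rewrite subn0.
Qed.

Lemma opSE j u c : opS j u c = zvec c j * u c.
Proof. by rewrite /opS tsmon0E (monom1 (zvec c) j). Qed.

Lemma opid_tsmon0 : @opid d = tsmon 0 exp0.
Proof.
by do 2!apply: functional_extensionality => ?; rewrite tsmon0E monom0 mul1r.
Qed.

Lemma opS_tsmon0 j b : opmul (opS j) (tsmon 0 b) = tsmon 0 (expD b (exp1 j)).
Proof.
do 2!apply: functional_extensionality => ?.
rewrite /opmul opSE !tsmon0E monomD monom1; ring.
Qed.

Lemma tsmon0_opS j b : opmul (tsmon 0 b) (opS j) = tsmon 0 (expD b (exp1 j)).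
Proof.
do 2!apply: functional_extensionality => ?.
rewrite /opmul !tsmon0E opSE monomD monom1; ring.
Qed.

Definition homogeneous a X := exists G : Fn d, forall u c, X u c = G c * u (c - a).

Lemma tsmon_homogeneous a b : homogeneous a (tsmon a b).
Proof. by exists (fun c => monom (zvec (c - a)) b). Qed.

Lemma opS_homogeneous j : homogeneous 0 (opS j).
Proof. exact: tsmon_homogeneous. Qed.

Definition expansion X (s : seq (C * Zd d * ('I_d -> nat))) :=
  forall u c, X u c = \sum_(p <- s) p.1.1 * tsmon p.1.2 p.2 u c.

Definition opsum (I : Type) (r : seq I) (F : I -> Op d) : Op d :=
  fun u c => \sum_(i <- r) F i u c.

Lemma opsum_nil (I : Type) (F : I -> Op d) : opsum [::] F = opscale 0 (@opid d).
Proof.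
by do 2!apply: functional_extensionality => ?; rewrite /opsum big_nil /opscale mul0r.
Qed.

Lemma opsum_cons (I : Type) i (r : seq I) F : opsum (i :: r) F = opadd (F i) (opsum r F).
Proof. by do 2!apply: functional_extensionality => ?; rewrite /opsum big_cons. Qed.

Lemma LaurentOpP X : LaurentOp X <-> exists s, expansion X s.
Proof.
split=> [[n [k [a [b H]]]] | [s H]].
  exists [seq (k i, a i, b i) | i <- index_enum 'I_n] => u c.
  by rewrite H big_map.
pose p0 := (0 : C, 0 : Zd d, exp0).
exists (size s), (fun i => (nth p0 s i).1.1), (fun i => (nth p0 s i).1.2),
  (fun i => (nth p0 s i).2) => u.
by apply: functional_extensionality => c; rewrite H (big_nth p0) big_mkord.
Qed.

Lemma Laurent_tsmon a b : LaurentOp (tsmon a b).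
Proof. by apply/LaurentOpP; exists [:: (1, a, b)] => u c; rewrite big_seq1 mul1r. Qed.

Lemma Laurent_add P Q : LaurentOp P -> LaurentOp Q -> LaurentOp (opadd P Q).
Proof.
move=> /LaurentOpP[s HP] /LaurentOpP[s' HQ]; apply/LaurentOpP; exists (s ++ s').
by move=> u c; rewrite big_cat /opadd HP HQ.
Qed.

Lemma Laurent_scale k P : LaurentOp P -> LaurentOp (opscale k P).
Proof.
move=> /LaurentOpP[s HP]; apply/LaurentOpP.
exists [seq (k * p.1.1, p.1.2, p.2) | p <- s] => u c.
by rewrite big_map /opscale HP mulr_sumr; apply: eq_bigr => p _; rewrite mulrA.
Qed.

Lemma Laurent_sum (I : Type) (r : seq I) (F : I -> Op d) :
  (forall i, LaurentOp (F i)) -> LaurentOp (opsum r F).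
Proof.
move=> HF; elim: r => [|i r IHr]; last by rewrite opsum_cons; apply: Laurent_add.
by apply/LaurentOpP; exists [::] => u c; rewrite /opsum !big_nil.
Qed.

Lemma Laurent_mulr_homogeneous a X Q : homogeneous a X ->
  (forall a' b, LaurentOp (opmul X (tsmon a' b))) -> LaurentOp Q -> LaurentOp (opmul X Q).
Proof.
move=> [G HX] HXt /LaurentOpP[s HQ].
suff -> : opmul X Q = opsum s (fun p => opscale p.1.1 (opmul X (tsmon p.1.2 p.2))).
  by apply: Laurent_sum => p; apply/Laurent_scale.
do 2!apply: functional_extensionality => ?.
rewrite /opsum /opmul /opscale HX HQ mulr_sumr; apply: eq_bigr => p _.
by rewrite HX mulrCA.
Qed.

Lemma opS_tsmon j a b :
  opmul (opS j) (tsmon a b) =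
  opadd (tsmon a (expD b (exp1 j))) (opscale (zvec a j) (tsmon a b)).
Proof.
do 2!apply: functional_extensionality => ? /=.
rewrite /opmul /opadd /opscale opSE !tsmonE monomD monom1 zvecB; ring.
Qed.

Lemma shift_tsmon a a' b : opmul (tsmon a exp0) (tsmon a' b) = tsmon (a + a') b.
Proof.
do 2!apply: functional_extensionality => ? /=.
by rewrite /opmul !tsmonE monom0 mul1r opprD addrA.
Qed.

Lemma Laurent_mul P Q : LaurentOp P -> LaurentOp Q -> LaurentOp (opmul P Q).
Proof.
move=> /LaurentOpP[s HP] HQ.
have sQ b : LaurentOp (opmul (tsmon 0 b) Q).
  elim/exps_ind: b => [|b j IHb]; first by rewrite -opid_tsmon0.
  rewrite -opS_tsmon0; apply: (Laurent_mulr_homogeneous (opS_homogeneous j)) IHb => a' b'.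
  by rewrite opS_tsmon; apply/Laurent_add/Laurent_scale; apply: Laurent_tsmon.
have tsQ a b : LaurentOp (opmul (tsmon a b) Q).
  have -> : opmul (tsmon a b) Q = opmul (tsmon a exp0) (opmul (tsmon 0 b) Q).
    by do 2!apply: functional_extensionality => ?; rewrite /opmul !tsmonE subr0 monom0 mul1r.
  apply: (Laurent_mulr_homogeneous (tsmon_homogeneous a exp0)) (sQ b) => a' b'.
  by rewrite shift_tsmon; apply: Laurent_tsmon.
suff -> : opmul P Q = opsum s (fun p => opscale p.1.1 (opmul (tsmon p.1.2 p.2) Q)).
  by apply: Laurent_sum => p; apply/Laurent_scale.
by do 2!apply: functional_extensionality => ?; rewrite /opmul HP.
Qed.

Definition deg0_eval (al : 'I_d -> C) (s : seq (C * Zd d * ('I_d -> nat))) : C :=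
  \sum_(p <- s | p.1.2 == 0) p.1.1 * monom al p.2.

Definition deg_part (s : seq (C * Zd d * ('I_d -> nat))) a : Op d :=
  fun u c => \sum_(p <- s | p.1.2 == a) p.1.1 * tsmon p.1.2 p.2 u c.

Definition degrees (s : seq (C * Zd d * ('I_d -> nat))) : seq (Zd d) :=
  undup (0 :: [seq p.1.2 | p <- s]).

Lemma deg_part_homogeneous s a : homogeneous a (deg_part s a).
Proof.
exists (fun c => \sum_(p <- s | p.1.2 == a) p.1.1 * monom (zvec (c - a)) p.2) => u c.
by rewrite /deg_part big_distrl; apply: eq_bigr => p /eqP <-; rewrite tsmonE mulrA.
Qed.

Lemma expansion_deg_part s a : expansion (deg_part s a) [seq p <- s | p.1.2 == a].
Proof. by move=> u c; rewrite big_filter. Qed.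

Lemma sum_deg_parts X s : expansion X s -> X = opsum (degrees s) (deg_part s).
Proof.
move=> HX; do 2!apply: functional_extensionality => ?; rewrite HX /opsum /deg_part.
apply: big_partition_seq => [|a a_s]; first exact: undup_uniq.
by rewrite /degrees mem_undup inE a_s orbT.
Qed.

Lemma zvec_neq0 a : a != 0 -> exists j, zvec a j != 0.
Proof.
move=> /eqP a_neq0; apply: NNPP => zvec_eq0; apply: a_neq0; apply/matrixP => i j.
rewrite ord1 !mxE; apply/eqP; rewrite -(intr_eq0 (complex Rdefinitions.R)).
case: eqP => // /eqP aj_neq0; exfalso; apply: zvec_eq0; by exists j.
Qed.

End LaurentOperators.

Section RingOfDifferentialOperators.
Variables (d : nat) (A : seq (Zd d)).
Implicit Types (a : Zd d) (b : 'I_d -> nat) (P Q X : Op d) (u : Fn d) (c : Zd d).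

Lemma inRA_add u u' : inRA A u -> inRA A u' -> inRA A (fun c => u c + u' c).
Proof.
move=> [[s Hs] NAu] [[s' Hs'] NAu']; split.
  exists (s ++ s') => c; rewrite mem_cat.
  by case: (eqVneq (u c) 0) => [->|/eqP/Hs -> //]; rewrite add0r => /Hs' ->; rewrite orbT.
by move=> c; case: (eqVneq (u c) 0) => [->|/eqP/NAu //]; rewrite add0r; apply: NAu'.
Qed.

Lemma inRA_mull (f : Fn d) u : inRA A u -> inRA A (fun c => f c * u c).
Proof.
move=> [[s Hs] NAu]; split.
  by exists s => c; case: (eqVneq (u c) 0) => [->|/eqP/Hs //]; rewrite mulr0.
by move=> c; case: (eqVneq (u c) 0) => [->|/eqP/NAu //]; rewrite mulr0.
Qed.

Lemma inRA_point c0 : inNA A c0 -> inRA A (fun c => if c == c0 then 1 else 0).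
Proof.
move=> c0_NA; split=> [|c]; last by case: eqP => [-> //|].
by exists [:: c0] => c; case: eqP => [->|]; rewrite ?mem_seq1.
Qed.

Lemma DRA_add P Q : DRA A P -> DRA A Q -> DRA A (opadd P Q).
Proof.
move=> [LP RP] [LQ RQ]; split=> [|u Hu]; first exact: Laurent_add.
exact: inRA_add (RP u Hu) (RQ u Hu).
Qed.

Lemma DRA_scale k P : DRA A P -> DRA A (opscale k P).
Proof.
move=> [LP RP]; split=> [|u /RP]; first exact: Laurent_scale.
exact: inRA_mull (fun _ => k) _.
Qed.

Lemma DRA_tsmon0 b : DRA A (tsmon 0 b).
Proof.
split=> [|u /(inRA_mull (fun c => monom (zvec c) b))]; first exact: Laurent_tsmon.
congr inRA; apply: functional_extensionality => c; by rewrite tsmon0E.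
Qed.

Lemma DRA_id : DRA A (@opid d).
Proof. by rewrite opid_tsmon0; apply: DRA_tsmon0. Qed.

Lemma DRA_S j : DRA A (opS j).
Proof. exact: DRA_tsmon0. Qed.

Lemma DRA_mul P Q : DRA A P -> DRA A Q -> DRA A (opmul P Q).
Proof.
move=> [LP RP] [LQ RQ]; split=> [|u /RQ /RP //]; exact: Laurent_mul.
Qed.

Lemma DRA_sum (I : Type) (r : seq I) (F : I -> Op d) :
  (forall i, DRA A (F i)) -> DRA A (opsum r F).
Proof.
move=> DF; elim: r => [|i r IHr]; first by rewrite opsum_nil; apply/DRA_scale/DRA_id.
by rewrite opsum_cons; apply: DRA_add.
Qed.

Lemma DRA_deg_part X s a : DRA A X -> expansion X s -> DRA A (deg_part s a).
Proof.
move=> [_ RX] HX; split.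
  by apply/LaurentOpP; exists [seq p <- s | p.1.2 == a]; apply: expansion_deg_part.
have [G HG] := deg_part_homogeneous s a.
(* Evaluating X on the point mass at c - a, at c, isolates the component of degree a. *)
have X_point c : X (fun z => if z == c - a then 1 else 0) c = G c.
  transitivity (deg_part s a (fun z => if z == c - a then 1 else 0) c).
    rewrite HX /deg_part [RHS]big_mkcond; apply: eq_bigr => p _ /=.
    rewrite tsmonE (inj_eq (addrI c)) eqr_opp.
    by case: eqP => [->|_]; rewrite ?mulr0.
  by rewrite HG eqxx mulr1.
move=> u [[t Ht] NAu]; split.
  exists [seq z + a | z <- t] => c; rewrite HG.
  case: (eqVneq (u (c - a)) 0) => [->|/eqP/Ht ca_t _]; first by rewrite mulr0.
  by apply/mapP; exists (c - a); rewrite ?subrK.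
move=> c; rewrite HG.
case: (eqVneq (u (c - a)) 0) => [->|/eqP/NAu ca_NA]; first by rewrite mulr0.
case: (eqVneq (G c) 0) => [->|Gc_neq0 _]; first by rewrite mul0r.
by apply: (RX _ (inRA_point ca_NA)).2; rewrite X_point; apply/eqP.
Qed.

End RingOfDifferentialOperators.

(* [op = true] is the multiplication of the opposite ring, which turns right modules into
   left ones. *)
Definition dmul d (op : bool) : Op d -> Op d -> Op d :=
  if op then fun P Q => opmul Q P else @opmul d.

Lemma DRA_dmul d (A : seq (Zd d)) op P Q : DRA A P -> DRA A Q -> DRA A (dmul op P Q).
Proof. by case: op => DP DQ; apply: DRA_mul. Qed.

Lemma dmul_opS_tsmon0 d op (j : 'I_d) b :
  dmul op (opS j) (tsmon 0 b) = tsmon 0 (expD b (exp1 j)).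
Proof. by case: op; [apply: tsmon0_opS | apply: opS_tsmon0]. Qed.

Lemma dmul_opS_homogeneous d op (j : 'I_d) a X : homogeneous a X ->
  dmul op (opS j) X = dmul op X (opadd (opS j) (opscale ((-1) ^+ op * zvec a j) (@opid d))).
Proof.
move=> [G HX]; do 2!apply: functional_extensionality => ? /=.
by case: op; rewrite /= /opmul /opadd /opscale /opid !opSE !HX !opSE zvecB; ring.
Qed.

Record Dmodule d (A : seq (Zd d)) (op : bool) (V : lmodType C) (act : Op d -> V -> V) :
  Prop := {
  dact_lin : forall P, DRA A P -> forall (k : C) x y,
    act P (k *: x + y) = k *: act P x + act P y;
  dact_add : forall P Q, DRA A P -> DRA A Q -> forall x, act (opadd P Q) x = act P x + act Q x;
  dact_scale : forall k P, DRA A P -> forall x, act (opscale k P) x = k *: act P x;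
  dact_mul : forall P Q, DRA A P -> DRA A Q -> forall x, act (dmul op P Q) x = act P (act Q x);
  dact_one : forall x, act (@opid d) x = x }.

Lemma leftDmod_Dmodule d (A : seq (Zd d)) V act : leftDmod A act -> @Dmodule d A false V act.
Proof. by case; split. Qed.

Lemma rightDmod_Dmodule d (A : seq (Zd d)) V act :
  rightDmod A act -> @Dmodule d A true V (fun P x => act x P).
Proof. by case=> lin add scale mul one; split=> // P Q DP DQ x; exact: mul DQ DP x. Qed.

Section DmoduleTheory.
Variables (d : nat) (A : seq (Zd d)) (op : bool) (V : lmodType C) (act : Op d -> V -> V).
Hypothesis M : Dmodule A op act.
Implicit Types (a : Zd d) (P Q X : Op d) (x y : V) (al lam mu : 'I_d -> C).

Lemma act0 P : DRA A P -> act P 0 = 0.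
Proof.
by move=> DP; have := dact_lin M DP (-1) 0 0; rewrite scaler0 addr0 scaleN1r addNr.
Qed.

Lemma actD P x y : DRA A P -> act P (x + y) = act P x + act P y.
Proof. by move=> DP; have := dact_lin M DP 1 x y; rewrite !scale1r. Qed.

Lemma actZ P k x : DRA A P -> act P (k *: x) = k *: act P x.
Proof. by move=> DP; have := dact_lin M DP k x 0; rewrite addr0 (act0 DP) addr0. Qed.

Lemma act_opsum (I : Type) (r : seq I) (F : I -> Op d) x :
  (forall i, DRA A (F i)) -> act (opsum r F) x = \sum_(i <- r) act (F i) x.
Proof.
move=> DF; elim: r => [|i r IHr].
  by rewrite opsum_nil (dact_scale M _ (DRA_id A)) scale0r big_nil.
by rewrite opsum_cons (dact_add M (DF i) (DRA_sum _ DF)) IHr big_cons.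
Qed.

Lemma lweightZ lam k x : lweight act lam x -> lweight act lam (k *: x).
Proof. by move=> Hx j; rewrite (actZ _ _ (DRA_S A j)) (Hx j) !scalerA mulrC. Qed.

Lemma act_tsmon0 lam x b : lweight act lam x -> act (tsmon 0 b) x = monom lam b *: x.
Proof.
move=> Hx; elim/exps_ind: b => [|b j IHb].
  by rewrite -opid_tsmon0 (dact_one M) monom0 scale1r.
rewrite -(dmul_opS_tsmon0 op) (dact_mul M (DRA_S A j) (DRA_tsmon0 A b)) IHb.
by rewrite (actZ _ _ (DRA_S A j)) (Hx j) scalerA monomD monom1 mulrC.
Qed.

Lemma lweight_homogeneous lam x a X : lweight act lam x -> homogeneous a X -> DRA A X ->
  lweight act (fun j => lam j + (-1) ^+ op * zvec a j) (act X x).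
Proof.
move=> Hx HX DX j; have DS := DRA_S A j.
have DSa : DRA A (opadd (opS j) (opscale ((-1) ^+ op * zvec a j) (@opid d))).
  exact/DRA_add/DRA_scale/DRA_id.
rewrite -(dact_mul M DS DX) (dmul_opS_homogeneous op j HX) (dact_mul M DX DSa).
rewrite (dact_add M DS (DRA_scale _ (DRA_id A))) (dact_scale M _ (DRA_id A)) (dact_one M).
by rewrite (Hx j) -scalerDl (actZ _ _ DX).
Qed.

Inductive off_weight al : V -> Prop :=
  | off_weight0 : off_weight al 0
  | off_weightD mu j x y :
      lweight act mu x -> mu j != al j -> off_weight al y -> off_weight al (x + y).

Lemma off_weight_weight al mu j x : lweight act mu x -> mu j != al j -> off_weight al x.
Proof. by move=> Hx mu_j; rewrite -[x]addr0; apply: off_weightD Hx mu_j (off_weight0 _). Qed.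

Lemma off_weight_add al x y : off_weight al x -> off_weight al y -> off_weight al (x + y).
Proof.
elim=> [|mu j x1 x2 Hx1 mu_j _ IH] Hy; first by rewrite add0r.
by rewrite -addrA; apply: off_weightD Hx1 mu_j (IH Hy).
Qed.

Lemma off_weightZ al k x : off_weight al x -> off_weight al (k *: x).
Proof.
elim=> [|mu j x1 x2 Hx1 mu_j _ IH]; first by rewrite scaler0; apply: off_weight0.
by rewrite scalerDr; apply: off_weightD (lweightZ k Hx1) mu_j IH.
Qed.

Lemma off_weight_sum al (I : Type) (r : seq I) (B : pred I) (F : I -> V) :
  (forall i, B i -> off_weight al (F i)) -> off_weight al (\sum_(i <- r | B i) F i).
Proof. by move=> HF; apply: big_ind => //; [apply: off_weight0 | apply: off_weight_add]. Qed.

Definition separator al mu (j : 'I_d) : Op d :=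
  opscale (al j - mu j)^-1 (opadd (opS j) (opscale (- mu j) (@opid d))).

Lemma DRA_separator al mu j : DRA A (separator al mu j).
Proof. exact/DRA_scale/DRA_add/DRA_scale/DRA_id/DRA_S. Qed.

Lemma act_separator al mu j lam x : lweight act lam x ->
  act (separator al mu j) x = ((al j - mu j)^-1 * (lam j - mu j)) *: x.
Proof.
move=> Hx; have DS := DRA_S A j; have Did := DRA_id A.
rewrite (dact_scale M _ (DRA_add DS (DRA_scale _ Did))) (dact_add M DS (DRA_scale _ Did)).
by rewrite (dact_scale M _ Did) (dact_one M) (Hx j) -scalerDl scalerA.
Qed.

Lemma weight_separation al v y : lweight act al v -> off_weight al y ->
  exists F, [/\ DRA A F, act F v = v, act F y = 0
              & forall lam x, lweight act lam x -> lweight act lam (act F x)].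
Proof.
move=> Hv; elim=> [|mu j x y' Hx mu_j _ [F [DF Fv Fy F_lweight]]].
  exists (@opid d); split; [exact: DRA_id | exact: (dact_one M) | exact: (dact_one M) |].
  by move=> lam x; rewrite (dact_one M).
have al_mu : al j - mu j != 0 by rewrite subr_eq0 eq_sym.
have Dsep := DRA_separator al mu j.
exists (dmul op (separator al mu j) F); split.
- exact: DRA_dmul.
- by rewrite (dact_mul M Dsep DF) Fv (act_separator _ _ _ Hv) mulVf ?scale1r.
- rewrite (dact_mul M Dsep DF) (actD _ _ DF) Fy addr0.
  by rewrite (act_separator _ _ _ (F_lweight _ _ Hx)) subrr mulr0 scale0r.
- move=> lam z Hz; rewrite (dact_mul M Dsep DF) (act_separator _ _ _ (F_lweight _ _ Hz)).
  exact/lweightZ/F_lweight.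
Qed.

Lemma off_weight_lweight_eq0 al v : lweight act al v -> off_weight al v -> v = 0.
Proof. by move=> Hv /(weight_separation Hv) [F [_ Fv Fv0 _]]; rewrite -Fv Fv0. Qed.

Lemma act_expansion_off_weight al v X s : lweight act al v -> DRA A X -> expansion X s ->
  off_weight al (act X v - deg0_eval al s *: v).
Proof.
move=> Hv DX HX; have Dpart a := DRA_deg_part a DX HX.
rewrite {1}(sum_deg_parts HX) (act_opsum _ v Dpart).
rewrite (bigD1_seq 0) ?undup_uniq ?mem_undup ?mem_head //=.
have -> : act (deg_part s 0) v = deg0_eval al s *: v.
  have -> : deg_part s 0 =
      opsum [seq p <- s | p.1.2 == 0] (fun p => opscale p.1.1 (tsmon 0 p.2)).
    do 2!apply: functional_extensionality => ?.
    by rewrite /opsum big_filter; apply: eq_bigr => p /eqP ->.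
  rewrite act_opsum; last by move=> p; apply/DRA_scale/DRA_tsmon0.
  rewrite /deg0_eval scaler_suml -[RHS]big_filter; apply: eq_bigr => p _.
  by rewrite (dact_scale M _ (DRA_tsmon0 A p.2)) (act_tsmon0 _ Hv) scalerA.
rewrite addrAC subrr add0r; apply: off_weight_sum => a a_neq0.
have [j aj_neq0] := zvec_neq0 a_neq0.
have Xav := lweight_homogeneous Hv (deg_part_homogeneous s a) (Dpart a).
apply: (off_weight_weight (j := j) Xav).
by rewrite -subr_eq0 addrAC subrr add0r mulf_eq0 signr_eq0.
Qed.

Lemma off_weight_actP al v X s : lweight act al v -> v <> 0 -> DRA A X -> expansion X s ->
  off_weight al (act X v) <-> deg0_eval al s = 0.
Proof.
move=> Hv v_neq0 DX HX; have Xv := act_expansion_off_weight Hv DX HX.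
split=> [Xv_off | eps0]; last by rewrite eps0 scale0r subr0 in Xv.
have : deg0_eval al s *: v = 0.
  apply: (off_weight_lweight_eq0 (lweightZ _ Hv)).
  have -> : deg0_eval al s *: v = act X v + (-1) *: (act X v - deg0_eval al s *: v).
    by rewrite scaleN1r opprB addrC subrK.
  exact/off_weight_add/off_weightZ.
by move/eqP; rewrite scaler_eq0 => /orP[/eqP // | /eqP].
Qed.

Lemma lsubmod_cyclic y : lsubmod A act (fun z => exists2 Q, DRA A Q & z = act Q y).
Proof.
split.
- exists (opscale 0 (@opid d)); first exact/DRA_scale/DRA_id.
  by rewrite (dact_scale M _ (DRA_id A)) scale0r.
- move=> _ _ [Q1 D1 ->] [Q2 D2 ->]; exists (opadd Q1 Q2); first exact: DRA_add.
  by rewrite (dact_add M D1 D2).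
- move=> k _ [Q1 D1 ->]; exists (opscale k Q1); first exact: DRA_scale.
  by rewrite (dact_scale M _ D1).
- move=> P _ DP [Q1 D1 ->]; exists (dmul op P Q1); first exact: DRA_dmul.
  by rewrite (dact_mul M DP D1).
Qed.

Lemma Dmodule_annP al : quot_M A al act -> lsimple A act -> forall P, DRA A P ->
  (forall x, act P x = 0) <->
  (forall Q R, DRA A Q -> DRA A R -> forall s,
     expansion (dmul op Q (dmul op P R)) s -> deg0_eval al s = 0).
Proof.
move=> [v [Hv v_gen]] [[x x_neq0] simple] P DP.
have v_neq0 : v <> 0.
  move=> v0; apply: x_neq0; have [Q [DQ ->]] := v_gen x; by rewrite v0 (act0 DQ).
have DQPR Q R : DRA A Q -> DRA A R -> DRA A (dmul op Q (dmul op P R)).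
  by move=> DQ DR; apply/DRA_dmul/DRA_dmul.
have QPRv Q R : DRA A Q -> DRA A R ->
    act (dmul op Q (dmul op P R)) v = act Q (act P (act R v)).
  by move=> DQ DR; rewrite (dact_mul M DQ (DRA_dmul _ DP DR)) (dact_mul M DP DR).
split=> [annP Q R DQ DR s HX | eps0 y].
  apply/(off_weight_actP Hv v_neq0 (DQPR Q R DQ DR) HX).
  by rewrite QPRv // annP (act0 DQ); apply: off_weight0.
have [R [DR ->]] := v_gen y; apply: NNPP => PRv_neq0.
case: (simple _ (lsubmod_cyclic (act P (act R v)))) => [cyc0 | /(_ v) [Q DQ v_cyc]].
  by apply: PRv_neq0; apply: cyc0; exists (@opid d); rewrite ?(dact_one M) //; apply: DRA_id.
have [s HX] := (LaurentOpP _).1 (DQPR Q R DQ DR).1.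
apply: (v_neq0 (off_weight_lweight_eq0 Hv _)).
rewrite {1}v_cyc -QPRv //; apply/(off_weight_actP Hv v_neq0 (DQPR Q R DQ DR) HX).
exact: eps0 HX.
Qed.
End DmoduleTheory.

Theorem proposition6p1 (d : nat) (A : seq (Zd d)) (genA : generates_Zd A)
  (alpha : 'I_d -> C)
  (L : lmodType C) (actL : Op d -> L -> L)
  (HLmod : leftDmod A actL) (HLO : inO_left actL) (HLs : lsimple A actL)
  (HLq : quot_M A alpha actL)
  (L' : lmodType C) (actR : L' -> Op d -> L')
  (HRmod : rightDmod A actR) (HRO : inO_right actR) (HRs : rsimple A actR)
  (HRq : quot_RM A alpha actR) :
  forall P : Op d, lAnn A actL P <-> rAnn A actR P.
Proof.
move=> P; have annL := Dmodule_annP (leftDmod_Dmodule HLmod) HLq HLs.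
have annR := Dmodule_annP (rightDmod_Dmodule HRmod) HRq HRs.
split=> -[DP annP]; split=> //.
  by apply/(annR P DP) => Q R DQ DR; apply: (annL P DP).1 annP R Q DR DQ.
by apply/(annL P DP) => Q R DQ DR; apply: (annR P DP).1 annP R Q DR DQ.
Qed.
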